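(* Let $p$ be a prime with $p\equiv -1\pmod 6$. Then for all integers $\alpha\ge1$ and $n\ge0$, \[ b_{8}\!\left(p^{2\alpha}n+\frac{(24i+7p)p^{2\alpha-1}-7}{24}\right)\equiv 0 \pmod 2 \] for each $i=1,\ldots,p-1$.
   Context: For a positive integer $\ell$, $b_\ell(n)$ denotes the number of partitions of $n$ having no part divisible by $\ell$. *)

From mathcomp Require Import all_boot.
Set Implicit Arguments. Unset Strict Implicit. Unset Printing Implicit Defensive.

(* A partition of n is encoded by its multiplicity function: f k is the
   number of parts equal to k, for 0 <= k <= n (no part exceeds n and no
   multiplicity exceeds n).  The condition "ell %| k -> f k = 0" forbids parts
   divisible by ell; since ell %| 0, it also forces f 0 = 0 (parts are positive). *)
Definition b (ell n : nat) : nat :=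
  #|[set f : {ffun 'I_n.+1 -> 'I_n.+1} |
      (\sum_(k < n.+1) (k : nat) * (f k : nat) == n)
      && [forall k : 'I_n.+1, (ell %| k) ==> ((f k : nat) == 0)]]|.

(* Modulo 2 the generating function f_8 / f_1 of b_8 is f_1^7 = f_1^3 f_1^4 =
   f_1^3 f_4, where f_c = (q^c; q^c)_oo.  Through f_1^3 = f_1 f_2 and the Jacobi
   triple product, f_1^3 and f_4 are congruent to sums of q^((x^2 - 1) / 8) and
   q^((y^2 - 1) / 6), so b_8(N) is even unless 24 N + 7 = 3 x^2 + 4 y^2 has a
   solution.  In the progression of the theorem 24 N + 7 = p^(2 alpha - 1) R
   with p not dividing R.  As -3 is not a square modulo p = 5 (mod 6),
   p | 3 x^2 + 4 y^2 forces p | x and p | y, and descent on the odd exponent of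
   p rules out every solution.
   Power series are polynomials compared modulo X^M, f_c is truncated to
   qpoch ('X^c) m, and the triple product enters in its finite form with
   Gaussian binomial coefficients. *)

From mathcomp Require Import all_boot all_algebra finfield.
From mathcomp Require Import zify ring.
Set Implicit Arguments. Unset Strict Implicit. Unset Printing Implicit Defensive.
Import GRing.Theory.

Lemma bin2_double a : 2 * 'C(a, 2) + a = a * a.
Proof. by elim: a => [|a IH] //; rewrite binS bin1 mulnDr; lia. Qed.

Lemma bin2D a b : 'C(a + b, 2) = 'C(a, 2) + 'C(b, 2) + a * b.
Proof.
elim: b => [|b IH]; first by rewrite addn0 bin0n muln0 !addn0.
by rewrite addnS binS bin1 IH binS bin1 mulnS; lia.
Qed.

Lemma sum_affine c d n : \sum_(i < n) (c * i + d) = c * 'C(n, 2) + d * n.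
Proof.
elim: n => [|n IH]; first by rewrite big_ord0 bin0n !muln0.
by rewrite big_ord_recr /= IH binS bin1; ring.
Qed.

(* The exponent c m (m - 1) / 2 + d m at m = k - n, written without negative
   numbers: for m = - t it equals c t (t - 1) / 2 + g t when c = d + g. *)
Definition jtp_exp (c d g n k : nat) : nat :=
  if n <= k then c * 'C(k - n, 2) + d * (k - n) else c * 'C(n - k, 2) + g * (n - k).

Lemma jtp_expE c d g n k : c = d + g -> k <= 2 * n ->
  c * 'C(k, 2) + d * k + c * n * (2 * n - k)
  = c * 'C(n, 2) + d * n + c * n * n + jtp_exp c d g n k.
Proof.
move=> hc hk; rewrite /jtp_exp; case: ifP => hnk.
  have [j hj] : exists j, k = n + j by exists (k - n); rewrite subnKC.
  have [r hr] : exists r, n = j + r by exists (n - j); rewrite subnKC //; lia.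
  have -> : k - n = j by lia.
  have -> : 2 * n - k = r by lia.
  by rewrite hj hr [j + r + j]addnC bin2D; ring.
have [t ht] : exists t, n = k + t by exists (n - k); rewrite subnKC //; lia.
have -> : n - k = t by lia.
have -> : 2 * n - k = k + 2 * t by lia.
rewrite ht bin2D hc; have := bin2_double t.
by move: 'C(k, 2) 'C(t, 2) => Ck Ct; nia.
Qed.

Lemma leq_dist_jtp_exp c d g n k : 0 < d -> 0 < g ->
  (k - n) + (n - k) <= jtp_exp c d g n k.
Proof.
move=> hd hg; rewrite /jtp_exp; case: ifP => hnk.
  have -> : n - k = 0 by lia.
  by apply: leq_trans (leq_addl _ _); rewrite addn0 leq_pmull.
have -> : k - n = 0 by lia.
by apply: leq_trans (leq_addl _ _); rewrite leq_pmull.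
Qed.

Section BigMul.
Variables (R : Type) (idx : R) (op : Monoid.law idx).

Lemma big_ord_mul c m (F : nat -> R) :
  \big[op/idx]_(k < c * m) F k = \big[op/idx]_(k < m) \big[op/idx]_(r < c) F (c * k + r).
Proof.
elim: m => [|m IH]; first by rewrite muln0 !big_ord0.
rewrite big_ord_recr /= -IH mulnS addnC -!(big_mkord xpredT).
rewrite (big_cat_nat (leq0n (c * m)) (leq_addr c _)) /=; congr (op _ _).
rewrite -{1}[c * m]add0n big_addn addKn big_mkord; apply: eq_bigr => i _.
by rewrite addnC.
Qed.

End BigMul.

Local Open Scope ring_scope.

Section GaussianBinomial.
Variables (R : comNzRingType) (q : R).

Fixpoint qbin (m k : nat) : R :=
  match m, k with
  | _, 0%N => 1
  | 0%N, _.+1 => 0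
  | m'.+1, k'.+1 => qbin m' k' + q ^+ k'.+1 * qbin m' k'.+1
  end.

Lemma qbin0 m : qbin m 0 = 1. Proof. by case: m. Qed.

Lemma qbin_small m k : (m < k)%N -> qbin m k = 0.
Proof.
elim: m k => [|m IH] [|k] //= hk.
by rewrite !IH ?mulr0 ?addr0 // ltnW.
Qed.

Lemma qbinomial_prod m x z :
  \prod_(i < m) (x + z * q ^+ i) =
  \sum_(k < m.+1) qbin m k * q ^+ 'C(k, 2) * z ^+ k * x ^+ (m - k).
Proof.
elim: m z => [|m IH] z; first by rewrite big_ord0 big_ord1 /= !expr0 !mulr1.
rewrite big_ord_recl /= expr0 mulr1.
under eq_bigr => i _ do rewrite /bump /= exprS mulrA.
rewrite IH mulrDl.
set S := \sum_(k < m.+1) _.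
rewrite [in RHS]big_ord_recl /= expr0 !mulr1 subn0 mul1r.
under [in RHS]eq_bigr => i _ do rewrite /bump /= add1n subSS !mulrDl.
rewrite big_split /= addrA [RHS]addrAC; congr (_ + _).
  rewrite /S big_ord_recl /= mulrDr subn0 expr0 !mulr1 qbin0 mul1r -exprS.
  rewrite [in RHS]big_ord_recr /= qbin_small // mulr0 !mul0r addr0; congr (_ + _).
  rewrite mulr_sumr; apply: eq_bigr => i _.
  rewrite /bump /= add1n add0n.
  have -> : (m - i = (m - i.+1).+1)%N by rewrite subnSK.
  by rewrite [x ^+ (m - i.+1).+1]exprS exprMn; ring.
rewrite /S mulr_sumr; apply: eq_bigr => i _.
by rewrite binS bin1 exprD exprS exprMn; ring.
Qed.

Definition qpoch (a : nat) : R := \prod_(i < a) (1 - q ^+ i.+1).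

Lemma qpoch0 : qpoch 0 = 1. Proof. by rewrite /qpoch big_ord0. Qed.

Lemma qpochS a : qpoch a.+1 = qpoch a * (1 - q ^+ a.+1).
Proof. by rewrite /qpoch big_ord_recr. Qed.

Lemma qbin_qpoch m k : (k <= m)%N -> qbin m k * qpoch k * qpoch (m - k) = qpoch m.
Proof.
elim: m k => [|m IH] [|k] //.
- by rewrite /= qpoch0 !mulr1.
- by rewrite qbin0 subn0 qpoch0 !mul1r.
rewrite ltnS leq_eqVlt => /orP[/eqP->|hk].
  rewrite /= (@qbin_small m m.+1) // mulr0 addr0 subnn qpochS.
  have := IH m (leqnn m); rewrite subnn qpoch0 !mulr1 => e.
  by rewrite mulrA e.
rewrite /= subSS [qpoch k.+1]qpochS [qpoch m.+1]qpochS.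
have e1 := IH k (ltnW hk).
have e2 := IH k.+1 hk; rewrite qpochS in e2.
have hmk : (m - k = (m - k.+1).+1)%N by rewrite subnSK.
have qmk : qpoch (m - k) = qpoch (m - k.+1) * (1 - q ^+ (m - k)).
  by rewrite {1}hmk qpochS -hmk.
have -> : q ^+ m.+1 = q ^+ k.+1 * q ^+ (m - k) by rewrite -exprD addSn subnKC // ltnW.
have -> : (qbin m k + q ^+ k.+1 * qbin m k.+1) * (qpoch k * (1 - q ^+ k.+1)) * qpoch (m - k)
    = qbin m k * qpoch k * qpoch (m - k) * (1 - q ^+ k.+1) + q ^+ k.+1 *
      (qbin m k.+1 * (qpoch k * (1 - q ^+ k.+1)) * qpoch (m - k.+1)) * (1 - q ^+ (m - k)).
  by rewrite qmk; ring.
by rewrite e1 e2; ring.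
Qed.

End GaussianBinomial.

Section TruncatedEquality.
Variable R : comNzRingType.
Implicit Types a b c d u : {poly R}.

Definition eqmodX (M : nat) a b := forall i, (i < M)%N -> a`_i = b`_i.

Lemma eqmodX_refl M a : eqmodX M a a. Proof. by []. Qed.

Lemma eqmodX_sym M a b : eqmodX M a b -> eqmodX M b a.
Proof. by move=> h i hi; rewrite h. Qed.

Lemma eqmodX_trans M a b c : eqmodX M a b -> eqmodX M b c -> eqmodX M a c.
Proof. by move=> h1 h2 i hi; rewrite h1 // h2. Qed.

Lemma eqmodXD M a b c d : eqmodX M a b -> eqmodX M c d -> eqmodX M (a + c) (b + d).
Proof. by move=> h1 h2 i hi; rewrite !coefD h1 // h2. Qed.

Lemma eqmodXM M a b c d : eqmodX M a b -> eqmodX M c d -> eqmodX M (a * c) (b * d).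
Proof.
move=> h1 h2 i hi; rewrite !coefM; apply: eq_bigr => j _.
have hj : (j < M)%N by apply: leq_ltn_trans hi; rewrite -ltnS.
by rewrite h1 // h2 //; apply: leq_ltn_trans hi; exact: leq_subr.
Qed.

Lemma eqmodXX M a b k : eqmodX M a b -> eqmodX M (a ^+ k) (b ^+ k).
Proof.
move=> h; elim: k => [|k IH]; first by rewrite !expr0.
by rewrite !exprS; apply: eqmodXM.
Qed.

Lemma eqmodX_sum M (I : Type) (r : seq I) (P : pred I) (F G : I -> {poly R}) :
  (forall i, P i -> eqmodX M (F i) (G i)) ->
  eqmodX M (\sum_(i <- r | P i) F i) (\sum_(i <- r | P i) G i).
Proof.
move=> h; elim/big_rec2: _ => [|i x y Pi hxy]; first exact: eqmodX_refl.
exact: eqmodXD (h _ Pi) hxy.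
Qed.

Lemma eqmodX_prod M (I : Type) (r : seq I) (P : pred I) (F G : I -> {poly R}) :
  (forall i, P i -> eqmodX M (F i) (G i)) ->
  eqmodX M (\prod_(i <- r | P i) F i) (\prod_(i <- r | P i) G i).
Proof.
move=> h; elim/big_rec2: _ => [|i x y Pi hxy]; first exact: eqmodX_refl.
exact: eqmodXM (h _ Pi) hxy.
Qed.

Lemma eqmodX_mulXn0 M e a : (M <= e)%N -> eqmodX M ('X^e * a) 0.
Proof.
move=> he i hi; rewrite coefXnM coef0.
by have -> : (i < e)%N by apply: leq_trans hi he.
Qed.

Lemma eqmodX_subXn M e : (M <= e)%N -> eqmodX M (1 - 'X^e) 1.
Proof.
move=> he i hi; rewrite coefB coefXn.
have -> : (i == e) = false by apply/negbTE; rewrite neq_ltn (leq_trans hi he).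
by rewrite subr0.
Qed.

Lemma eqmodX_prod_ord M (f : nat -> {poly R}) m n :
  (forall k, (m <= k)%N -> eqmodX M (f k) 1) -> (m <= n)%N ->
  eqmodX M (\prod_(k < n) f k) (\prod_(k < m) f k).
Proof.
move=> hf; elim: n => [|n IH]; first by rewrite leqn0 => /eqP->.
rewrite leq_eqVlt => /orP[/eqP->|]; first exact: eqmodX_refl.
rewrite ltnS => hmn; rewrite big_ord_recr /= -[X in eqmodX _ _ X]mulr1.
exact: eqmodXM (IH hmn) (hf _ hmn).
Qed.

Lemma eqmodX_mul2r M a b u :
  u`_0 = 1 -> eqmodX M (a * u) (b * u) -> eqmodX M a b.
Proof.
move=> u0 h i; elim: i {-2}i (leqnn i) => [|n IH] i hi hM.
  move: hi hM; rewrite leqn0 => /eqP-> hM.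
  by have := h 0%N hM; rewrite !coefM !big_ord1 /= u0 !mulr1.
have := h i hM; rewrite !coefM !big_ord_recr /= subnn u0 !mulr1.
have -> : \sum_(j < i) a`_j * u`_(i - j) = \sum_(j < i) b`_j * u`_(i - j).
  apply: eq_bigr => j _; rewrite IH //; last by apply: ltn_trans hM.
  by rewrite -ltnS; apply: leq_trans hi.
by move/addrI.
Qed.

Lemma coef0_qpochXn (c m : nat) : (0 < c)%N -> (qpoch ('X^c : {poly R}) m)`_0 = 1.
Proof.
move=> c0; rewrite /qpoch; elim/big_rec: _ => [|i x _ hx]; first by rewrite coef1.
rewrite coef0M hx mulr1 coefB coef1 -exprM coefXn.
have -> : (0 == c * i.+1)%N = false by rewrite eq_sym eqn0Ngt muln_gt0 c0.
by rewrite subr0.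
Qed.

Lemma eqmodX_qpochXn M (c m m' : nat) : (m <= m')%N -> (M <= c * m.+1)%N ->
  eqmodX M (qpoch ('X^c : {poly R}) m') (qpoch ('X^c) m).
Proof.
move=> hm hM; apply: (eqmodX_prod_ord (f := fun k => 1 - ('X^c) ^+ k.+1) _ hm) => k hk.
by rewrite -exprM; apply: eqmodX_subXn; apply: leq_trans hM _; rewrite leq_mul2l ltnS hk orbT.
Qed.

End TruncatedEquality.

Section JacobiTripleProduct.
Variable R : idomainType.

Lemma jacobi_triple_finite (c d g n : nat) : c = (d + g)%N ->
  \prod_(i < n) ((1 + 'X^(c * i + g)) * (1 + 'X^(c * i + d))) =
  \sum_(k < (2 * n).+1) qbin ('X^c : {poly R}) (2 * n) k * 'X^(jtp_exp c d g n k).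
Proof.
move=> hc.
set S := (c * 'C(n, 2) + d * n + c * n * n)%N.
have XS0 : ('X^S : {poly R}) != 0 by rewrite expf_neq0 // polyX_eq0.
apply: (mulfI XS0).
have RHSE : \sum_(k < (2 * n).+1) qbin ('X^c : {poly R}) (2 * n) k * ('X^c) ^+ 'C(k, 2)
      * ('X^d) ^+ k * ('X^(c * n)) ^+ (2 * n - k)
    = 'X^S * \sum_(k < (2 * n).+1) qbin ('X^c) (2 * n) k * 'X^(jtp_exp c d g n k).
  rewrite mulr_sumr; apply: eq_bigr => k _.
  rewrite -!exprM -mulrA -!exprD -mulrA -exprD mulrCA -exprD.
  have hk : (k <= 2 * n)%N by rewrite -ltnS.
  by rewrite /S -(jtp_expE hc hk) addnA.
rewrite -RHSE -qbinomial_prod mul2n -addnn big_split_ord /=.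
have lower : \prod_(i < n) ('X^(c * n) + 'X^d * ('X^c : {poly R}) ^+ i) =
    'X^(c * 'C(n, 2) + d * n) * \prod_(i < n) (1 + 'X^(c * i + g)).
  transitivity (\prod_(i < n) ('X^(c * i + d) * (1 + ('X^(c * (n - i.+1) + g) : {poly R})))).
    apply: eq_bigr => i _; rewrite mulrDr mulr1 -!exprM -!exprD addrC.
    congr (_ + _); congr ('X^_); first exact: addnC.
    have [r hr] : exists r, n = (i + r.+1)%N by exists (n - i.+1)%N; rewrite -addSnnS subnKC.
    have -> : (n - i.+1 = r)%N by lia.
    by rewrite {1}hr hc; ring.
  rewrite big_split /= prodrXr sum_affine; congr (_ * _).
  by rewrite [RHS](reindex_inj rev_ord_inj) /=.
have upper : \prod_(i < n) ('X^(c * n) + 'X^d * ('X^c : {poly R}) ^+ (n + i)) =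
    'X^(c * n * n) * \prod_(i < n) (1 + 'X^(c * i + d)).
  transitivity (\prod_(i < n) ('X^(c * n) * (1 + ('X^(c * i + d) : {poly R})))).
    apply: eq_bigr => i _; rewrite mulrDr mulr1 -!exprM -!exprD.
    by congr (_ + _); congr ('X^_); ring.
  by rewrite big_split /= prodr_const card_ord -exprM.
by rewrite lower upper /S big_split /= !exprD; ring.
Qed.

Lemma eqmodX_qbin_qpochXn (M c m n k : nat) : (0 < c)%N -> (k <= m)%N ->
  (M <= k)%N -> (M <= m - k)%N -> (M <= n)%N ->
  eqmodX M (qbin ('X^c : {poly R}) m k * qpoch ('X^c) n) 1.
Proof.
move=> c0 hkm hMk hMmk hMn.
have tail a : (M <= a)%N -> eqmodX M (qpoch ('X^c : {poly R}) a) (qpoch ('X^c) M).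
  by move=> ha; apply: eqmodX_qpochXn => //; apply: leq_trans (leqnSn M) _; rewrite leq_pmull.
have h : eqmodX M (qbin ('X^c : {poly R}) m k * qpoch ('X^c) M * qpoch ('X^c) M)
                  (1 * qpoch ('X^c) M).
  rewrite mul1r; apply: eqmodX_trans (tail m _); last by lia.
  rewrite -(qbin_qpoch _ hkm).
  by apply: eqmodXM; first apply: eqmodXM => //; apply: eqmodX_sym; apply: tail.
apply: eqmodX_trans (eqmodX_mul2r (coef0_qpochXn _ _ c0) h).
by apply: eqmodXM => //; apply: tail.
Qed.

Lemma jacobi_triple_eqmodX (c d g n M : nat) :
  c = (d + g)%N -> (0 < d)%N -> (0 < g)%N -> (2 * M <= n)%N ->
  eqmodX M (\prod_(i < n) ((1 + 'X^(c * i + g)) * (1 + 'X^(c * i + d)))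
             * qpoch ('X^c : {poly R}) n)
           (\sum_(k < (2 * n).+1) 'X^(jtp_exp c d g n k)).
Proof.
move=> hc hd hg hn.
rewrite jacobi_triple_finite // mulr_suml; apply: eqmodX_sum => k _.
rewrite mulrAC [_ * 'X^_]mulrC.
have hk : (k <= 2 * n)%N by rewrite -ltnS.
have [he|he] := leqP M (jtp_exp c d g n k).
  apply: eqmodX_trans (eqmodX_mulXn0 _ he) _; apply: eqmodX_sym.
  by rewrite -[X in eqmodX _ X _]mulr1; apply: eqmodX_mulXn0.
rewrite -[X in eqmodX _ _ X]mulr1; apply: eqmodXM => //.
have := leq_dist_jtp_exp c n k hd hg => hdist.
apply: eqmodX_qbin_qpochXn => //; lia.
Qed.

End JacobiTripleProduct.

Section PartitionGeneratingFunction.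
Variable R : comNzRingType.

(* The factor for k enumerates the multiplicity j of the part k; the parts
   divisible by ell (including the junk part 0) may only have multiplicity 0. *)
Definition bgen (ell N : nat) : {poly R} :=
  \prod_(k < N.+1) \sum_(j < N.+1) ((ell %| k)%N ==> (j == 0%N :> nat))%:R%:P * 'X^(k * j).

Lemma prodr_bool_natr (I : finType) (P : pred I) :
  \prod_(i : I) (P i)%:R = [forall i, P i]%:R :> R.
Proof.
case: forallP => [h|/forallP]; first by rewrite big1 // => i _; rewrite h.
rewrite negb_forall => /existsP[i /negbTE Pi].
by rewrite (bigD1 i) //= Pi mul0r.
Qed.

Lemma coef_bgen ell N : (bgen ell N)`_N = (b ell N)%:R.
Proof.
rewrite /bgen bigA_distr_bigA /= coef_sum /b cardsE -sumr_const [RHS]big_mkcond /=.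
apply: eq_bigr => f _; rewrite unfold_in.
rewrite big_split /= -rmorph_prod prodrXr coefCM coefXn eq_sym prodr_bool_natr.
by case: (_ == N); case: [forall _, _]; rewrite /= ?mulr0 ?mulr1.
Qed.

Lemma bgen_factorE ell N k :
  \sum_(j < N.+1) ((ell %| k)%N ==> (j == 0%N :> nat))%:R%:P * 'X^(k * j)
  = if (ell %| k)%N then 1 else \sum_(j < N.+1) 'X^(k * j) :> {poly R}.
Proof.
case: ifP => _ /=; last by under eq_bigr => j _ do rewrite mul1r.
rewrite big_ord_recl /= muln0 expr0 mulr1 big1 ?addr0 //.
by move=> j _; rewrite mul0r.
Qed.

Lemma geom_Xn_mul k m :
  (\sum_(j < m) 'X^(k * j)) * (1 - 'X^k) = 1 - 'X^(k * m) :> {poly R}.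
Proof.
rewrite mulrC -[1 in RHS](expr1n _ m) exprM subrXX; congr (_ * _).
by apply: eq_bigr => j _; rewrite expr1n mul1r exprM.
Qed.

Lemma prod_dvdn_qpochXn ell N : (0 < ell)%N ->
  \prod_(k < ell * N) (if (ell %| k.+1)%N then 1 - 'X^(k.+1) else 1 : {poly R})
  = qpoch ('X^ell) N.
Proof.
case: ell => // l _.
rewrite (big_ord_mul _ _ _ (fun k => if (l.+1 %| k.+1)%N then 1 - 'X^(k.+1) else 1)).
apply: eq_bigr => i _ /=; rewrite big_ord_recr /= big1 ?mul1r => [|r _].
  have -> : (l.+1 * i + l).+1 = (l.+1 * i.+1)%N by rewrite mulnS; lia.
  by rewrite dvdn_mulr // exprM.
have hr : (r < l)%N := ltn_ord r.
have -> : (l.+1 * i + r).+1 = (l.+1 * i + r.+1)%N by lia.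
by rewrite dvdn_addr ?dvdn_mulr // gtnNdvd.
Qed.

Lemma bgen_qpoch ell N : (0 < ell)%N ->
  eqmodX N.+1 (bgen ell N * qpoch 'X N) (qpoch ('X^ell) N).
Proof.
move=> ell0.
pose H k : {poly R} := if (ell %| k.+1)%N then 1 - 'X^(k.+1) else 1.
have factor k : (k < N)%N ->
    eqmodX N.+1 ((if (ell %| k.+1)%N then 1 else \sum_(j < N.+1) 'X^(k.+1 * j))
                 * (1 - 'X^(k.+1))) (H k).
  rewrite /H; case: ifP => _ hk; first by rewrite mul1r.
  by rewrite geom_Xn_mul; apply: eqmodX_subXn; rewrite leq_pmull.
have tail : eqmodX N.+1 (\prod_(k < ell * N) H k) (\prod_(k < N) H k).
  apply: eqmodX_prod_ord; last by rewrite leq_pmull.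
  by move=> k hk; rewrite /H; case: ifP => // _; apply: eqmodX_subXn.
rewrite -prod_dvdn_qpochXn //; apply: eqmodX_trans (eqmodX_sym tail).
rewrite /bgen big_ord_recl bgen_factorE dvdn0 mul1r /qpoch -big_split /=.
by apply: eqmodX_prod => k _; rewrite /bump /= add1n bgen_factorE; exact: factor.
Qed.

End PartitionGeneratingFunction.

Arguments bgen {R}.

Section ModTwo.
Local Notation P := {poly 'F_2}.

Lemma pchar2_polyF2 : (2 \in [pchar P])%N.
Proof. by rewrite pchar_poly (pchar_Fp (isT : prime 2)). Qed.

Lemma sqr_oneDXn a : (1 + 'X^a) ^+ 2 = 1 + 'X^(2 * a) :> P.
Proof.
by rewrite sqrrD mulr2n (addrr_pchar2 pchar2_polyF2) addr0 expr1n -exprM mulnC.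
Qed.

Lemma qpochXn_F2 c m : qpoch ('X^c : P) m = \prod_(k < m) (1 + 'X^(c * k.+1)).
Proof. by apply: eq_bigr => k _; rewrite (GRing.subr_pchar2 pchar2_polyF2) -exprM. Qed.

Lemma qpochXn_sqr c m : qpoch ('X^c : P) m ^+ 2 = qpoch ('X^(2 * c)) m.
Proof.
rewrite !qpochXn_F2 -prodrXl; apply: eq_bigr => k _.
by rewrite sqr_oneDXn mulnA.
Qed.

Lemma gauss_F2 n :
  qpoch ('X^1 : P) (4 * n) * qpoch ('X^2) (2 * n) =
  \prod_(i < n) ((1 + 'X^(4 * i + 1)) * (1 + 'X^(4 * i + 3))) * qpoch ('X^4) (2 * n).
Proof.
rewrite !qpochXn_F2 (big_ord_mul _ _ _ (fun k => 1 + 'X^(1 * k.+1) : P)).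
rewrite (big_ord_mul _ _ _ (fun k => 1 + 'X^(2 * k.+1) : P)).
rewrite (big_ord_mul _ _ _ (fun k => 1 + 'X^(4 * k.+1) : P)).
rewrite -!big_split; apply: eq_bigr => i _ /=.
rewrite !big_ord_recr !big_ord0 /= !mul1r.
have -> : (1 * (4 * i + 0).+1 = 4 * i + 1)%N by lia.
have -> : (1 * (4 * i + 2).+1 = 4 * i + 3)%N by lia.
have -> : (1 * (4 * i + 1).+1 = 2 * (2 * i + 0).+1)%N by lia.
have -> : (1 * (4 * i + 3).+1 = 2 * (2 * i + 1).+1)%N by lia.
have -> : (4 * (2 * i + 0).+1 = 2 * (2 * (2 * i + 0).+1))%N by lia.
have -> : (4 * (2 * i + 1).+1 = 2 * (2 * (2 * i + 1).+1))%N by lia.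
by rewrite -!sqr_oneDXn; ring.
Qed.

Lemma pentagonal_F2 n :
  \prod_(i < n) ((1 + 'X^(12 * i + 8)) * (1 + 'X^(12 * i + 4))) * qpoch ('X^12 : P) n
  = qpoch ('X^4) (3 * n).
Proof.
rewrite !qpochXn_F2 (big_ord_mul _ _ _ (fun k => 1 + 'X^(4 * k.+1) : P)) -big_split.
apply: eq_bigr => i _ /=; rewrite !big_ord_recr big_ord0 /= mul1r.
have -> : (4 * (3 * i + 0).+1 = 12 * i + 4)%N by lia.
have -> : (4 * (3 * i + 1).+1 = 12 * i + 8)%N by lia.
have -> : (4 * (3 * i + 2).+1 = 12 * i.+1)%N by lia.
by ring.
Qed.

Lemma qpoch_cube_F2 M n : (2 * M <= n)%N ->
  eqmodX M (qpoch ('X^1 : P) (4 * n) ^+ 3) (\sum_(k < (2 * n).+1) 'X^(jtp_exp 4 3 1 n k)).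
Proof.
move=> hn; rewrite exprS qpochXn_sqr.
apply: eqmodX_trans (_ : eqmodX M _ (qpoch ('X^1) (4 * n) * qpoch ('X^2) (2 * n))) _.
  by apply: eqmodXM => //; apply: eqmodX_qpochXn; lia.
rewrite gauss_F2.
apply: eqmodX_trans
  (_ : eqmodX M _ (\prod_(i < n) ((1 + 'X^(4 * i + 1)) * (1 + 'X^(4 * i + 3)))
                   * qpoch ('X^4) n)) _.
  by apply: eqmodXM => //; apply: eqmodX_qpochXn; lia.
exact: jacobi_triple_eqmodX.
Qed.

Lemma qpoch_pow4_F2 M n : (2 * M <= n)%N ->
  eqmodX M (qpoch ('X^1 : P) (4 * n) ^+ 4) (\sum_(k < (2 * n).+1) 'X^(jtp_exp 12 4 8 n k)).
Proof.
move=> hn; rewrite (exprM _ 2 2) !qpochXn_sqr.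
apply: eqmodX_trans (_ : eqmodX M _ (qpoch ('X^4) (3 * n))) _.
  by apply: eqmodX_qpochXn; lia.
rewrite -pentagonal_F2; exact: jacobi_triple_eqmodX.
Qed.

Lemma bgen8_F2 N : eqmodX N.+1 (bgen 8 N : P) (qpoch ('X^1) N ^+ 7).
Proof.
apply: (@eqmodX_mul2r _ _ _ _ (qpoch ('X^1) N)); first exact: coef0_qpochXn.
rewrite -exprSr (exprM _ 2 4) (exprM _ 2 2) !qpochXn_sqr.
exact: bgen_qpoch.
Qed.

End ModTwo.

Lemma sqr_8jtp_exp n k : exists x, (8 * jtp_exp 4 3 1 n k + 1 = x ^ 2)%N.
Proof.
rewrite /jtp_exp; case: ifP => _.
  exists (4 * (k - n) + 1)%N; rewrite -mulnn; have := bin2_double (k - n).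
  by move: (k - n)%N 'C(k - n, 2) => j C; nia.
case: (n - k)%N => [|s]; first by exists 1%N; rewrite addn0.
exists (4 * s + 3)%N; rewrite -mulnn; have := bin2_double s.+1.
by move: 'C(s.+1, 2) => C; nia.
Qed.

Lemma sqr_6jtp_exp n k : exists y, (6 * jtp_exp 12 4 8 n k + 1 = y ^ 2)%N.
Proof.
rewrite /jtp_exp; case: ifP => _.
  case: (k - n)%N => [|s]; first by exists 1%N; rewrite addn0.
  exists (6 * s + 5)%N; rewrite -mulnn; have := bin2_double s.+1.
  by move: 'C(s.+1, 2) => C; nia.
exists (6 * (n - k) + 1)%N; rewrite -mulnn; have := bin2_double (n - k).
by move: (n - k)%N 'C(n - k, 2) => t C; nia.
Qed.

Lemma b8_even N : (forall x y, 3 * x ^ 2 + 4 * y ^ 2 != 24 * N + 7)%N -> (2 %| b 8 N)%N.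
Proof.
move=> no_rep; set n := (2 * N.+1)%N.
have f1_pow7 : eqmodX N.+1 (qpoch ('X^1 : {poly 'F_2}) N ^+ 7)
   ((\sum_(k < (2 * n).+1) 'X^(jtp_exp 4 3 1 n k))
    * (\sum_(k < (2 * n).+1) 'X^(jtp_exp 12 4 8 n k))).
  apply: eqmodX_trans (_ : eqmodX _ _ (qpoch ('X^1) (4 * n) ^+ (3 + 4))) _.
    by apply/eqmodXX/eqmodX_sym/eqmodX_qpochXn; lia.
  rewrite exprD; exact: eqmodXM (qpoch_cube_F2 (leqnn n)) (qpoch_pow4_F2 (leqnn n)).
have := eqmodX_trans (@bgen8_F2 N) f1_pow7 (ltnSn N).
rewrite coef_bgen mulr_suml coef_sum big1 => [/eqP|k _].
  by rewrite -(dvdn_pcharf (pchar_Fp (isT : prime 2))).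
rewrite mulr_sumr coef_sum big1 // => k' _; rewrite -exprD coefXn.
have [x hx] := sqr_8jtp_exp n k; have [y hy] := sqr_6jtp_exp n k'.
case: eqP => // hN; have := no_rep x y.
by rewrite hN -hx -hy; case/negP; apply/eqP; ring.
Qed.

Section QuadraticForm.
Variable p : nat.
Hypotheses (pr_p : prime p) (p_mod6 : (p %% 6 = 5)%N).

Lemma Fp_cube_root1 (w : 'F_p) : w ^+ 3 = 1 -> w = 1.
Proof.
move=> w3.
have w2 : w ^+ 2 = w.
  have wp : w ^+ p = w by have := expf_card w; rewrite card_Fp.
  have : w ^+ (p %/ 3 * 3 + 2) = w ^+ p by congr (_ ^+ _); lia.
  by rewrite wp exprD mulnC exprM w3 expr1n mul1r.
have : w * (w - 1) == 0 by rewrite mulrBr mulr1 -expr2 w2 subrr.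
rewrite mulf_eq0 subr_eq0 => /orP[/eqP w0|/eqP //].
by move: w3; rewrite w0 expr0n /= => /eqP; rewrite eq_sym oner_eq0.
Qed.

Lemma Fp_natr_eq0 k : (k%:R == 0 :> 'F_p) = (p %| k)%N.
Proof. by rewrite (dvdn_pcharf (pchar_Fp pr_p)). Qed.

Lemma Fp_natr_neq0 k : (0 < k < 5)%N -> k%:R != 0 :> 'F_p.
Proof. by case/andP=> k0 k5; rewrite Fp_natr_eq0; apply/negP => /(dvdn_leq k0); lia. Qed.

Lemma Fp_neg3_nonsquare (u : 'F_p) : u ^+ 2 != - 3%:R.
Proof.
have n2 : 2%:R != 0 :> 'F_p by apply: Fp_natr_neq0.
have n3 : 3%:R != 0 :> 'F_p by apply: Fp_natr_neq0.
apply/eqP => hu.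
(* w = (u - 1) / 2 is a primitive cube root of unity *)
set w := (u - 1) / 2%:R.
have hw : w ^+ 2 + w + 1 = 0.
  apply: (mulIf (mulf_neq0 n2 n2)); rewrite mul0r.
  have -> : (w ^+ 2 + w + 1) * (2%:R * 2%:R)
      = (w * 2%:R) ^+ 2 + (w * 2%:R) * 2%:R + 4%:R by ring.
  rewrite /w divfK //.
  have -> : (u - 1) ^+ 2 + (u - 1) * 2%:R + 4%:R = u ^+ 2 + 3%:R by ring.
  by rewrite hu addNr.
have w1 : w = 1.
  apply: Fp_cube_root1; apply/eqP; rewrite -subr_eq0.
  have -> : w ^+ 3 - 1 = (w - 1) * (w ^+ 2 + w + 1) by ring.
  by rewrite hw mulr0.
have three : 1 ^+ 2 + 1 + 1 = 3%:R :> 'F_p by ring.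
by move/eqP: hw; rewrite w1 three (negbTE n3).
Qed.

Lemma dvd_3sqr_4sqr x y :
  (p %| 3 * x ^ 2 + 4 * y ^ 2)%N -> (p %| x)%N /\ (p %| y)%N.
Proof.
rewrite -!Fp_natr_eq0 natrD !natrM -!expr2 => /eqP h0.
set X : 'F_p := x%:R in h0 *; set Y : 'F_p := y%:R in h0 *.
have n3 : 3%:R != 0 :> 'F_p by apply: Fp_natr_neq0.
suff Y0 : Y = 0.
  split; last by rewrite Y0.
  by move: h0; rewrite Y0 expr0n mulr0 addr0 => /eqP; rewrite mulf_eq0 (negbTE n3) expf_eq0.
apply/eqP/negPn/negP => nY.
have nY2 : 2%:R * Y != 0 := mulf_neq0 (Fp_natr_neq0 (isT : (0 < 2 < 5)%N)) nY.
suff hu : (3%:R * X / (2%:R * Y)) ^+ 2 = - 3%:R.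
  by move/eqP: hu; apply/negP/Fp_neg3_nonsquare.
apply: (mulIf (expf_neq0 2 nY2)); rewrite -exprMn divfK //.
have -> : (3%:R * X) ^+ 2 = 3%:R * (3%:R * X ^+ 2) by ring.
have -> : 3%:R * X ^+ 2 = - (4%:R * Y ^+ 2) by apply/eqP; rewrite -addr_eq0 h0.
by ring.
Qed.

Lemma dvd_3sqr_4sqr_scale x y : (p %| 3 * x ^ 2 + 4 * y ^ 2)%N ->
  exists x' y', (3 * x ^ 2 + 4 * y ^ 2 = p ^ 2 * (3 * x' ^ 2 + 4 * y' ^ 2))%N.
Proof. by case/dvd_3sqr_4sqr => /dvdnP[x' ->] /dvdnP[y' ->]; exists x', y'; ring. Qed.

Lemma neq_3sqr_4sqr_podd R : ~~ (p %| R)%N ->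
  forall a x y, (3 * x ^ 2 + 4 * y ^ 2 != p ^ (2 * a + 1) * R)%N.
Proof.
move=> nR; elim=> [|a IH] x y; apply/eqP => h.
all: have [x' [y' e]] := dvd_3sqr_4sqr_scale
  (etrans (congr1 (dvdn p) h) (dvdn_mulr _ (dvdn_exp (ltn0Sn _) (dvdnn p)))).
  move: h; rewrite e muln0 add0n expn1 expnS expn1 -mulnA => /eqP.
  by rewrite eqn_pmul2l ?prime_gt0 // => /eqP hR; move: nR; rewrite -hR dvdn_mulr.
move: h; rewrite e (_ : 2 * a.+1 + 1 = 2 + (2 * a + 1))%N; last lia.
rewrite expnD -mulnA.
by move/eqP; rewrite eqn_pmul2l ?expn_gt0 ?prime_gt0 // (negbTE (IH x' y')).
Qed.

End QuadraticForm.

Local Close Scope ring_scope.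

Lemma mod24_of_mod6 p : p %% 6 = 5 -> p %% 24 \in [:: 5; 11; 17; 23].
Proof.
rewrite -(modn_dvdm p (isT : 6 %| 24)).
by move: (p %% 24) (ltn_pmod p (isT : 0 < 24)) => r; do 24?case: r => [|r] //.
Qed.

Lemma sqr_mod24 p : p %% 6 = 5 -> p ^ 2 = 1 %[mod 24].
Proof. by move/mod24_of_mod6; rewrite -modnXm !inE => /or4P[] /eqP ->. Qed.

Lemma coprime24 p : p %% 6 = 5 -> coprime p 24.
Proof. by move/mod24_of_mod6; rewrite -coprime_modl !inE => /or4P[] /eqP ->. Qed.

Lemma progression_factor p alpha n i : prime p -> p %% 6 = 5 -> 0 < alpha -> 0 < i < p ->
  exists2 R, ~~ (p %| R) &
    24 * (p ^ (2 * alpha) * n + ((24 * i + 7 * p) * p ^ (2 * alpha - 1) - 7) %/ 24) + 7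
    = p ^ (2 * (alpha - 1) + 1) * R.
Proof.
move=> pr_p p6 alpha0 /andP[i0 ip].
set q := p ^ (2 * alpha - 1).
have pq : p * q = p ^ (2 * alpha) by rewrite -expnS; congr (p ^ _); lia.
have [T hT] : exists T, p * q = 24 * T + 1.
  exists (p * q %/ 24); rewrite {1}(divn_eq (p * q) 24) mulnC; congr (_ + _).
  by rewrite pq expnM -modnXm sqr_mod24 // modn_small // exp1n.
exists (24 * p * n + 24 * i + 7 * p).
  rewrite (_ : 24 * p * n + 24 * i + 7 * p = 24 * i + p * (24 * n + 7)); last by ring.
  rewrite (dvdn_addl _ (dvdn_mulr _ (dvdnn p))) Gauss_dvdr ?coprime24 //.
  by apply/negP => /(dvdn_leq i0); lia.
have -> : (24 * i + 7 * p) * q - 7 = 24 * (i * q + 7 * T).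
  have -> : (24 * i + 7 * p) * q = 24 * (i * q) + 7 * (p * q) by ring.
  by rewrite hT; lia.
rewrite mulKn // (_ : 2 * (alpha - 1) + 1 = 2 * alpha - 1); last lia.
rewrite -/q -pq.
have -> : 24 * (p * q * n + (i * q + 7 * T)) + 7 = 24 * (p * q * n + i * q) + 7 * (24 * T + 1).
  by ring.
by rewrite -hT; ring.
Qed.

Theorem theorem3p22 (p : nat) (hp : prime p) (hp6 : p %% 6 = 5)
  (alpha n i : nat) (halpha : 1 <= alpha) (hi1 : 1 <= i) (hi2 : i <= p - 1) :
  b 8 (p ^ (2 * alpha) * n
       + ((24 * i + 7 * p) * p ^ (2 * alpha - 1) - 7) %/ 24) = 0 %[mod 2].
Proof.
have i_lt_p : 0 < i < p by have := prime_gt1 hp; lia.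
have [R nR rep] := progression_factor n hp hp6 halpha i_lt_p.
apply/eqP; apply: b8_even => x y; rewrite rep.
exact: neq_3sqr_4sqr_podd.
Qed.
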